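(* Let $r \in \mathbb{Z}$ and let $P_{n,k}=[x^n]\,\frac{1+rx^2}{1+x^2}\left(\frac{x}{1+x^2}\right)^k$ for $n,k\ge 0$. Then for all $n,k\ge 0$, $$P_{n,k}=\left(\binom{\frac{n+k}{2}}{k}-r \binom{\frac{n+k-2}{2}}{k}\right)(-1)^{\frac{n-k}{2}}\frac{1+(-1)^{n-k}}{2}+r\cdot 0^{n+k},$$ and $$P_{n,k}=\binom{\frac{n+k}{2}}{k}\left(1-\frac{r(n-k)}{n+k+0^{n+k}}\right)(-1)^{\frac{n-k}{2}}\frac{1+(-1)^{n-k}}{2},$$ where any expression carrying the factor $\frac{1+(-1)^{n-k}}{2}$ is interpreted as $0$ when $n-k$ is odd.
   Context: $[x^n]h(x)$ denotes the coefficient of $x^n$ in the power series $h(x)$. $0^m$ equals $1$ if $m=0$ and $0$ if $m>0$. For an integer $a$ and integer $k\ge 0$, $\binom{a}{k}=\frac{a(a-1)\cdots(a-k+1)}{k!}$ (so $\binom{-1}{0}=1$ and $\binom{a}{k}=0$ when $0\le a<k$). The numbers $P_{n,k}$ form the coefficient array (Riordan array $\left(\frac{1+rx^2}{1+x^2},\frac{x}{1+x^2}\right)$) of the restricted Chebyshev–Boubaker polynomials $P_n(x;r)=\sum_k P_{n,k}x^k$. *)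

From mathcomp Require Import all_boot all_order all_algebra.
Set Implicit Arguments. Unset Strict Implicit. Unset Printing Implicit Defensive.
Import Order.TTheory GRing.Theory Num.Theory.
Local Open Scope ring_scope.

(* Formal power series over rat, represented by their coefficient sequences:
   f n = [x^n] f. *)
Definition fps := nat -> rat.

Definition fps_of_poly (p : {poly rat}) : fps := fun n => p`_n.

Definition fmul (f g : fps) : fps :=
  fun n => \sum_(i < n.+1) f i * g (n - i)%N.

Fixpoint fpow (f : fps) (k : nat) : fps :=
  match k with
  | 0 => fun n => (n == 0%N)%:R
  | k'.+1 => fmul f (fpow f k')
  end.

(* Multiplicative inverse of a power series with constant term 1:
   g 0 = 1, g m = - \sum_(1 <= i <= m) f i * g (m - i).
   finv_seq f m lists g 0, ..., g m. *)
Fixpoint finv_seq (f : fps) (m : nat) : seq rat :=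
  match m with
  | 0 => [:: 1]
  | m'.+1 => let s := finv_seq f m' in
             rcons s (- \sum_(1 <= i < m.+1) f i * nth 0 s (m - i)%N)
  end.

Definition finv (f : fps) : fps := fun n => nth 0 (finv_seq f n) n.

Definition Pnk (r : int) (n k : nat) : rat :=
  fmul (fmul (fps_of_poly (1 + r%:~R *: 'X^2)) (finv (fps_of_poly (1 + 'X^2))))
       (fpow (fmul (fps_of_poly 'X) (finv (fps_of_poly (1 + 'X^2)))) k) n.

Definition binz (a : int) (k : nat) : rat :=
  (\prod_(i < k) (a%:~R - i%:R)) / (k`!)%:R.

From Pilot Require Import Defs.
From mathcomp Require Import all_boot all_order all_algebra zify ring.
From Stdlib Require Import FunctionalExtensionality.
Import Order.TTheory GRing.Theory Num.Theory.
Local Open Scope ring_scope.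

(* Write C = 1/(1 + x^2) and T = x C, so that P_{n,k} = [x^n] (1 + r x^2) C T^k
   = s_k(n) + r s_k(n - 2) with s_k = C T^k = x^k / (1 + x^2)^(k+1).
   Multiplication by 1 + x^2 is injective and maps s_0 to 1 and s_(k+1) to x s_k;
   by Pascal's rule the same holds for the candidate coefficients
   (-1)^((n-k)/2) binom((n+k)/2, k) (zero when n - k is odd), so s_k has them as
   coefficients.  The second formula follows from a binom(a-1, k) = (a-k) binom(a, k)
   for the generalized binomial coefficient. *)

Definition fone : fps := fun n => (n == 0%N)%:R.

Definition fshift (f : fps) : fps := fun n => if n is n'.+1 then f n' else 0.

Definition fmul1X2 (f : fps) : fps := fun n => f n + fshift (fshift f) n.

Lemma fmul1f (g : fps) : fmul fone g = g.
Proof.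
apply: functional_extensionality => n; rewrite /fmul big_ord_recl subn0 mul1r.
by rewrite big1 ?addr0 // => i _; rewrite mul0r.
Qed.

Lemma fmul_shiftl (f g : fps) : fmul (fshift f) g = fshift (fmul f g).
Proof.
apply: functional_extensionality => -[|n]; rewrite /fmul.
  by rewrite big_ord1 mul0r.
by rewrite big_ord_recl mul0r add0r; apply: eq_bigr => i _; rewrite subSS.
Qed.

Lemma fmulDl (f1 f2 g : fps) :
  fmul (fun n => f1 n + f2 n) g = fun n => fmul f1 g n + fmul f2 g n.
Proof.
apply: functional_extensionality => n; rewrite /fmul -big_split /=.
by apply: eq_bigr => i _; rewrite mulrDl.
Qed.

Lemma fmulZl (a : rat) (f g : fps) :
  fmul (fun n => a * f n) g = fun n => a * fmul f g n.
Proof.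
apply: functional_extensionality => n; rewrite /fmul mulr_sumr.
by apply: eq_bigr => i _; rewrite mulrA.
Qed.

Lemma fmul_mul1X2l (f g : fps) : fmul (fmul1X2 f) g = fmul1X2 (fmul f g).
Proof. by rewrite /fmul1X2 fmulDl !fmul_shiftl. Qed.

Lemma fmul1X2_inj (f g : fps) : fmul1X2 f = fmul1X2 g -> f = g.
Proof.
move=> efg; have E n : f n + fshift (fshift f) n = g n + fshift (fshift g) n.
  by rewrite -/(fmul1X2 f n) efg.
apply: functional_extensionality => n.
suff : f n = g n /\ f n.+1 = g n.+1 by case.
elim: n => [|n [IH0 IH1]]; first by move: (E 0%N) (E 1%N); rewrite /= !addr0.
by split=> //; move: (E n.+2) => /=; rewrite IH0 => /addIr.
Qed.

Lemma size_finv_seq (f : fps) m : size (finv_seq f m) = m.+1.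
Proof. by elim: m => //= m IH; rewrite size_rcons IH. Qed.

Lemma nth_finv_seq (f : fps) i m : (i <= m)%N -> nth 0 (finv_seq f m) i = Defs.finv f i.
Proof.
elim: m => [|m IH]; first by rewrite leqn0 => /eqP ->.
rewrite leq_eqVlt => /orP[/eqP -> //| lt_im].
by rewrite /= nth_rcons size_finv_seq lt_im IH.
Qed.

Lemma finvS (f : fps) m :
  Defs.finv f m.+1 = - \sum_(i < m.+1) f i.+1 * Defs.finv f (m - i)%N.
Proof.
rewrite /Defs.finv /= nth_rcons size_finv_seq ltnn eqxx big_add1 /= big_mkord.
by congr (- _); apply: eq_bigr => i _; rewrite subSS nth_finv_seq // leq_subr.
Qed.

Lemma fmul_finv (f : fps) : f 0%N = 1 -> fmul f (Defs.finv f) = fone.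
Proof.
move=> f0; apply: functional_extensionality => -[|m]; rewrite /fmul.
  by rewrite big_ord1 f0 mul1r.
by rewrite big_ord_recl f0 mul1r subn0 finvS addNr.
Qed.

Lemma fps_of_polyX : fps_of_poly 'X = fshift fone.
Proof. by apply: functional_extensionality => -[|[|n]]; rewrite /fps_of_poly coefX. Qed.

Lemma fps_of_poly_1ZX2 (c : rat) :
  fps_of_poly (1 + c *: 'X^2) = fun n => fone n + c * fshift (fshift fone) n.
Proof.
apply: functional_extensionality => n.
by rewrite /fps_of_poly coefD coef1 coefZ coefXn; case: n => [|[|[|n]]].
Qed.

Definition inv1X2 : fps := Defs.finv (fps_of_poly (1 + 'X^2)).

Definition tser : fps := fshift inv1X2.

Definition sser (k : nat) : fps := fmul inv1X2 (fpow tser k).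

Lemma fmul1X2_inv1X2 : fmul1X2 inv1X2 = fone.
Proof.
have E : fps_of_poly (1 + 'X^2) = fmul1X2 fone.
  rewrite -[in LHS](scale1r 'X^2) fps_of_poly_1ZX2.
  by apply: functional_extensionality => n; rewrite mul1r.
by rewrite -(fmul1f inv1X2) -fmul_mul1X2l -E fmul_finv // E /fmul1X2.
Qed.

Lemma fmul1X2_sser k : fmul1X2 (sser k) = fpow tser k.
Proof. by rewrite -fmul_mul1X2l fmul1X2_inv1X2 fmul1f. Qed.

Lemma fpow_tserS k : fpow tser k.+1 = fshift (sser k).
Proof. exact: fmul_shiftl. Qed.

Lemma Pnk_sser (r : int) n k :
  Pnk r n k = sser k n + r%:~R * fshift (fshift (sser k)) n.
Proof.
rewrite /Pnk -/inv1X2.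
have -> : fmul (fps_of_poly 'X) inv1X2 = tser by rewrite fps_of_polyX fmul_shiftl fmul1f.
by rewrite fps_of_poly_1ZX2 fmulDl fmulZl !fmul_shiftl fmul1f fmulDl fmulZl !fmul_shiftl.
Qed.

(* For even n + k the sign is (-1)^((n-k)/2), written without truncated
   subtraction; for n < k the binomial coefficient vanishes. *)
Definition sser_coef (k n : nat) : rat :=
  if odd (n + k) then 0 else (-1) ^+ ((n + k)./2 + k) * 'C((n + k)./2, k)%:R.

Lemma sser_coef_odd k n : odd (n + k) -> sser_coef k n = 0.
Proof. by rewrite /sser_coef => ->. Qed.

Lemma sser_coef_even k n a :
  (n + k = a.*2)%N -> sser_coef k n = (-1) ^+ (a + k) * 'C(a, k)%:R.
Proof. by rewrite /sser_coef => ->; rewrite odd_double doubleK. Qed.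

Lemma fmul1X2_sser_coef0 : fmul1X2 (sser_coef 0) = fone.
Proof.
apply: functional_extensionality => -[|[|m]]; rewrite /fmul1X2 /fone /=.
- by rewrite (sser_coef_even 0 0 0) // addr0.
- by rewrite sser_coef_odd // addr0.
have [hodd | /even_halfK] := boolP (odd m).
  by rewrite !sser_coef_odd ?addr0 ?addn0 //= negbK.
move: m./2 => a ha.
rewrite (sser_coef_even 0 m a) ?addn0 // (sser_coef_even 0 m.+2 a.+1); last lia.
by rewrite !bin0 !mulr1 !addn0 exprS mulN1r addNr.
Qed.

Lemma fmul1X2_sser_coefS k : fmul1X2 (sser_coef k.+1) = fshift (sser_coef k).
Proof.
apply: functional_extensionality => -[|m]; rewrite /fmul1X2 /=.
  rewrite /sser_coef; case: ifP => // _.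
  by rewrite bin_small ?mulr0 ?addr0 //; lia.
have [hodd | /even_halfK] := boolP (odd (m + k)).
  by case: m hodd => [|m] hodd /=; rewrite !sser_coef_odd ?addr0 //; lia.
move: (m + k)./2 => a ha.
have shifted : fshift (sser_coef k.+1) m = - ((-1) ^+ (a + k) * 'C(a, k.+1)%:R).
  case: m ha => [|m] ha /=.
    by rewrite bin_small ?mulr0 ?oppr0 //; lia.
  by rewrite (sser_coef_even k.+1 m a) ?addnS // exprS mulN1r mulNr.
rewrite shifted (sser_coef_even k m a) // (sser_coef_even k.+1 m.+1 a.+1); last lia.
by rewrite binS natrD addSn addnS !exprS !mulN1r opprK mulrDr addrAC subrr add0r.
Qed.

Lemma sserE k : sser k = sser_coef k.
Proof.
elim: k => [|k IH]; apply: fmul1X2_inj; rewrite fmul1X2_sser.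
  by rewrite fmul1X2_sser_coef0.
by rewrite fpow_tserS IH fmul1X2_sser_coefS.
Qed.

Lemma binz_nat (a k : nat) : binz a%:Z k = 'C(a, k)%:R.
Proof.
have ffact : \prod_(i < k) ((a%:Z)%:~R - i%:R) = (a ^_ k)%:R :> rat.
  elim: k => [|k IH]; first by rewrite big_ord0 ffactn0.
  rewrite big_ord_recr /= IH ffactnSr natrM.
  by case: (leqP k a) => [le_ka | lt_ak]; [rewrite natrB | rewrite ffact_small ?mul0r].
by rewrite /binz ffact -bin_ffact natrM mulfK // pnatr_eq0 -lt0n fact_gt0.
Qed.

Lemma binz0 (a : int) : binz a 0 = 1.
Proof. by rewrite /binz big_ord0 divr1. Qed.

Lemma mul_binzB1 (a : int) k :
  binz (a - 1) k * a%:~R = binz a k * (a%:~R - k%:R).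
Proof.
have prodS : \prod_(i < k) ((a - 1)%:~R - i%:R) * a%:~R = \prod_(i < k.+1) (a%:~R - i%:R) :> rat.
  rewrite big_ord_recl subr0 mulrC; congr (_ * _); apply: eq_bigr => i _.
  by rewrite lift0 -natr1 intrD opprD addrA addrAC.
by rewrite /binz mulrAC prodS big_ord_recr /= mulrAC.
Qed.

Lemma exprz_N1_subn (R : fieldType) (m n : nat) :
  (-1) ^ (m%:Z - n%:Z) = (-1) ^+ (m + n) :> R.
Proof. by rewrite expfzDr ?oppr_eq0 ?oner_eq0 // -exprz_inv invrN1 exprD. Qed.

Lemma Pnk_odd (r : int) n k : odd (n + k) -> Pnk r n k = 0.
Proof.
move=> hodd; rewrite Pnk_sser sserE sser_coef_odd // add0r.
by case: n hodd => [|[|n]] hodd /=; rewrite ?mulr0 // sser_coef_odd ?mulr0 //; lia.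
Qed.

(* At n = k = 0 the shifted series has no term although binz (-1) 0 = 1:
   this is where the correction r 0^(n+k) comes from. *)
Lemma fshift2_sser_coef_even k n a : (n + k = a.*2)%N ->
  fshift (fshift (sser_coef k)) n = 0 ^+ (n + k) - binz (a%:Z - 1) k * (-1) ^+ (a + k).
Proof.
case: a => [|a] e.
  have [-> ->] : n = 0%N /\ k = 0%N by lia.
  by rewrite binz0 mul1r subrr.
have -> : a.+1%:Z - 1 = a by rewrite -addn1 PoszD addrK.
rewrite expr0n binz_nat; have -> : (n + k == 0)%N = false by lia.
case: n e => [|[|n]] e /=; try by rewrite bin_small ?mul0r ?subrr //; lia.
rewrite (sser_coef_even k n a); last lia.
by rewrite addSn exprS mulN1r mulrN sub0r opprK mulrC.
Qed.

Lemma Pnk_even (r : int) n k a : (n + k = a.*2)%N ->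
  Pnk r n k = (binz a k - r%:~R * binz (a%:Z - 1) k) * (-1) ^+ (a + k) + r%:~R * 0 ^+ (n + k).
Proof.
move=> e; rewrite Pnk_sser sserE (sser_coef_even k n a) //.
by rewrite (fshift2_sser_coef_even k n a) // binz_nat; ring.
Qed.

Lemma Pnk_even_ratio (r : int) n k a : (n + k = a.*2)%N ->
  Pnk r n k =
    binz a k * (1 - r%:~R * (n%:R - k%:R) / ((n + k)%:R + 0 ^+ (n + k))) * (-1) ^+ (a + k).
Proof.
move=> e; rewrite (Pnk_even r n k a e); case: a e => [|a] e.
  have [-> ->] : n = 0%N /\ k = 0%N by lia.
  by rewrite !binz0 /=; field.
have -> : 0 ^+ (n + k) = 0 :> rat by rewrite expr0n; case: eqP => //; lia.
have a1_neq0 : a.+1%:R != 0 :> rat by rewrite pnatr_eq0.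
have binz_pred : binz (a.+1%:Z - 1) k = binz a.+1 k * (a.+1%:R - k%:R) / a.+1%:R.
  by apply: (mulIf a1_neq0); rewrite mulfVK // mul_binzB1.
have n_eq : n%:R = 2 * a.+1%:R - k%:R :> rat.
  by apply/eqP; rewrite eq_sym subr_eq -natrD e -muln2 natrM mulrC.
rewrite binz_pred n_eq addr0 natrD n_eq.
by field; rewrite subrK nat1r mulf_neq0 ?a1_neq0.
Qed.

Lemma sign_parity_factor (n k : nat) :
  (-1) ^ ((n%:Z - k%:Z) %/ 2)%Z * ((1 + (-1) ^ (n%:Z - k%:Z)) / 2) =
    if odd (n + k) then 0 else (-1) ^+ ((n + k)./2 + k) :> rat.
Proof.
rewrite exprz_N1_subn -signr_odd; case: ifP => [_ | /negbT /even_halfK].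
  by rewrite expr1 subrr mul0r mulr0.
move: (n + k)./2 => a e.
have -> : n%:Z - k%:Z = (a%:Z - k%:Z) * 2 by lia.
by rewrite mulzK // exprz_N1_subn expr0 divff ?mulr1.
Qed.

Theorem mainTheorem2 (r : int) (n k : nat) :
  Pnk r n k =
    (binz ((n + k)./2)%N%:Z k - r%:~R * binz (((n + k)./2)%N%:Z - 1) k)
      * (-1) ^ ((n%:Z - k%:Z) %/ 2)%Z
      * ((1 + (-1) ^ (n%:Z - k%:Z)) / 2)
    + r%:~R * 0 ^+ (n + k)
  /\
  Pnk r n k =
    binz ((n + k)./2)%N%:Z k
      * (1 - r%:~R * (n%:R - k%:R) / ((n + k)%:R + 0 ^+ (n + k)))
      * (-1) ^ ((n%:Z - k%:Z) %/ 2)%Z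
      * ((1 + (-1) ^ (n%:Z - k%:Z)) / 2).
Proof.
rewrite -!(mulrA _ ((-1) ^ _)) sign_parity_factor.
have [hodd | heven] := boolP (odd (n + k)).
  have -> : 0 ^+ (n + k) = 0 :> rat by rewrite expr0n; case: eqP => // e; rewrite e in hodd.
  by rewrite Pnk_odd // !mulr0 addr0.
move/even_halfK: heven; move: (n + k)./2 => a /esym e.
split; first exact: Pnk_even.
by rewrite (Pnk_even_ratio r n k a e) -(mulrA (binz _ k)).
Qed.
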